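(* Let $\lambda$ be a partition, $\nu\in\mathcal{U}(\lambda)$, $(x,y)=\nu/\lambda$, and let $u,v\ge1$ be integers. (1) If $c=(x+u,y)$, then \[ P^{q,t}_\lambda(\nu\mid c)=t^{\ell_\lambda(c)}\frac{1-q}{1-q^{a_\nu(c)+1}t^{\ell_\nu(c)}}\prod_{c'\in{\rm arm}_\lambda(c)\setminus\{\nu/\lambda\}}\frac{1-q^{a_\lambda(c')+1}t^{\ell_\lambda(c')}}{1-q^{a_\nu(c')+1}t^{\ell_\nu(c')}}. \] (2) If $c=(x,y+v)$, then \[ P^{q,t}_\lambda(\nu\mid c)=\frac{1-t}{1-q^{a_\nu(c)}t^{\ell_\nu(c)+1}}\prod_{c''\in{\rm leg}_\lambda(c)\setminus\{\nu/\lambda\}}\frac{1-q^{a_\lambda(c'')}t^{\ell_\lambda(c'')+1}}{1-q^{a_\nu(c'')}t^{\ell_\nu(c'')+1}}. \]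
   Context: Partitions are Young diagrams in French convention: cells $(x,y)\in\mathbb{Z}_{>0}^2$ with $x\le\lambda_y$; $\lambda'$ is the conjugate, with $\lambda_j=0$ for $j>\lambda'_1$, $\lambda'_i=0$ for $i>\lambda_1$. $\mathcal{U}(\lambda)$ is the set of partitions obtained by adding one cell to $\lambda$. For a partition $\kappa$, $\overline{\kappa}=\mathbb{Z}_{>0}^2\setminus\kappa$, and for $c=(x,y)\in\overline{\kappa}$: ${\rm arm}_\kappa(c)=\{(i,y):\kappa_y<i<x\}$, ${\rm leg}_\kappa(c)=\{(x,j):\kappa'_x<j<y\}$, exterior arm-length $a_\kappa(c)=|{\rm arm}_\kappa(c)|$ and exterior leg-length $\ell_\kappa(c)=|{\rm leg}_\kappa(c)|$ (all arm/leg lengths in the statement are these exterior ones; the relevant cells lie outside both $\lambda$ and $\nu$). $c\in\overline{\lambda}$ is an outer corner iff $a_\lambda(c)=\ell_\lambda(c)=0$. For $c'\in{\rm arm}_\lambda(c)\cup{\rm leg}_\lambda(c)$, $P(c\rightarrow c')=q^{a_\lambda(c)-i}\frac{t^{\ell_\lambda(c)}(1-q)}{1-q^{a_\lambda(c)}t^{\ell_\lambda(c)}}$ if $c'=(x-i,y)$, and $P(c\rightarrow c')=t^{j-1}\frac{1-t}{1-q^{a_\lambda(c)}t^{\ell_\lambda(c)}}$ if $c'=(x,y-j)$. The exterior $(q,t)$-hook walk from $c$ terminates if $c$ is an outer corner, otherwise moves to $c'$ with probability $P(c\rightarrow c')$ and repeats; $P^{q,t}_\lambda(\nu\mid c)$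 is the probability (a rational function in $q,t$) that it terminates at the cell $\nu/\lambda$. *)

From HB Require Import structures.
From mathcomp Require Import all_boot all_order all_algebra.
From mathcomp Require Import fraction.
Set Implicit Arguments. Unset Strict Implicit. Unset Printing Implicit Defensive.
Import Order.TTheory GRing.Theory Num.Theory.
Local Open Scope ring_scope.

(* Partitions are represented by their (weakly decreasing, positive) row
   lengths: l = [:: l_1; l_2; ...].  Cells are pairs (x, y) of positive
   integers (French convention: x = column, y = row). *)
Definition is_partition (l : seq nat) : bool :=
  sorted geq l && all (fun r => (0 < r)%N) l.

Definition rowl (l : seq nat) (y : nat) : nat := nth 0%N l y.-1.
Definition coll (l : seq nat) (x : nat) : nat := count (fun r => (x <= r)%N) l.

Definition in_part (l : seq nat) (c : nat * nat) : bool :=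
  [&& (0 < c.1)%N, (0 < c.2)%N & (c.1 <= rowl l c.2)%N].

(* exterior arm and leg (for c outside the partition) *)
Definition arm (l : seq nat) (c : nat * nat) : seq (nat * nat) :=
  [seq (i, c.2) | i <- iota (rowl l c.2).+1 (c.1 - (rowl l c.2).+1)].
Definition leg (l : seq nat) (c : nat * nat) : seq (nat * nat) :=
  [seq (c.1, j) | j <- iota (coll l c.1).+1 (c.2 - (coll l c.1).+1)].
Definition armlen (l : seq nat) (c : nat * nat) : nat := (c.1 - rowl l c.2).-1.
Definition leglen (l : seq nat) (c : nat * nat) : nat := (c.2 - coll l c.1).-1.

Definition adds_cell (l nu : seq nat) (e : nat * nat) : Prop :=
  [/\ is_partition nu, (0 < e.1)%N, (0 < e.2)%N, ~~ in_part l e &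
      forall c, in_part nu c = in_part l c || (c == e)].

Definition K : fieldType := {fraction {poly {poly rat}}}.
Definition qv : K := @FracField.tofrac {poly {poly rat}} (('X : {poly rat})%:P).
Definition tv : K := @FracField.tofrac {poly {poly rat}} 'X.

(* Exterior (q,t)-hook walk, by first-step analysis; the fuel n bounds the
   number of steps (each step decreases x + y). hw l e n c is the probability
   that the walk started at c terminates at the cell e. *)
Fixpoint hw (l : seq nat) (e : nat * nat) (n : nat) (c : nat * nat) : K :=
  match n with
  | 0%N => 0
  | n'.+1 =>
    let a := armlen l c in let b := leglen l c in
    if (a == 0%N) && (b == 0%N) then (c == e)%:R
    else \sum_(1 <= i < a.+1)
            (qv ^+ (a - i) * tv ^+ b * (1 - qv) / (1 - qv ^+ a * tv ^+ b))
              * hw l e n' (c.1 - i, c.2)%N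
       + \sum_(1 <= j < b.+1)
            (tv ^+ j.-1 * (1 - tv) / (1 - qv ^+ a * tv ^+ b))
              * hw l e n' (c.1, c.2 - j)%N
  end.

(* P^{q,t}_lambda(nu | c), where e = nu/lambda *)
Definition hook_prob (l : seq nat) (e c : nat * nat) : K :=
  hw l e (c.1 + c.2) c.

From HB Require Import structures.
From mathcomp Require Import all_boot all_order all_algebra.
From mathcomp Require Import fraction.
From mathcomp Require Import zify ring.
Set Implicit Arguments. Unset Strict Implicit. Unset Printing Implicit Defensive.
Import Order.TTheory GRing.Theory Num.Theory.
Local Open Scope ring_scope.

(* Let e = (x, y) = nu/lambda, an outer corner of lambda.  The walk only moves
   left or down, so from c = (x + u, y) every leg move leaves row y for good and
   only arm moves along row y can reach e; there the cell (x + i, y) has arm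
   length i.  The hitting probabilities p_i thus obey a one-dimensional
   recursion, and the weighted partial sums sum_(m < i) q^m p_m telescope into
   products: appending the term q^i p_i multiplies the sum by
   (1 - q^(i+1) t^(l_i)) / (1 - q^i t^(l_i)).  The column case is the same with
   arm and leg moves exchanged.  Finally, the arm and leg lengths in nu differ
   from those in lambda only along row y and column x, which turns the products
   into the stated form. *)

Lemma eq_of_leq_gt0 (m n : nat) :
  (forall b, (0 < b)%N -> (b <= m)%N = (b <= n)%N) -> m = n.
Proof.
move=> leq_mn; case: (ltngtP m n) => // [m_lt_n | n_lt_m].
- by have := leq_mn n (leq_ltn_trans (leq0n m) m_lt_n); rewrite leqnn leqNgt m_lt_n.
- by have := leq_mn m (leq_ltn_trans (leq0n n) n_lt_m); rewrite leqnn leqNgt n_lt_m.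
Qed.

Lemma initial_segment_add1 (r r' x : nat) : (0 < x)%N -> (r < x)%N ->
  (forall b, (0 < b)%N -> (b <= r')%N = (b <= r)%N || (b == x)) ->
  r = x.-1 /\ r' = x.
Proof.
move=> x_gt0 r_lt_x seg.
have x_le_r' : (x <= r')%N by rewrite seg // eqxx orbT.
have r'_lt_Sx : (r' < x.+1)%N.
  by rewrite ltnNge seg // gtn_eqF // orbF -ltnS ltnNge ltnW.
have Px_le_r : (x.-1 <= r)%N.
  case: x x_gt0 r_lt_x x_le_r' r'_lt_Sx seg => [|[|x]] // _ _ x_le_r' _ seg.
  by have := seg x.+1 isT; rewrite (ltnW x_le_r') ltn_eqF // orbF => <-.
split; lia.
Qed.

Lemma sorted_geq_count (s : seq nat) a j : sorted geq s -> (0 < a)%N ->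
  (j < count (leq a) s)%N = (a <= nth 0%N s j)%N.
Proof.
elim: s j => [|b s IH] j /= s_sorted a_gt0; first by rewrite nth_nil; case: a a_gt0.
have geq_trans : transitive geq := rev_trans leq_trans.
have s_le_b : all (geq b) s := order_path_min geq_trans s_sorted.
have {}IH := IH _ (path_sorted s_sorted) a_gt0.
case: (leqP a b) => [a_le_b | b_lt_a].
  by case: j => [|j]; rewrite ?a_le_b // add1n ltnS IH.
have -> : count (leq a) s = 0%N.
  apply/eqP; rewrite -leqn0 leqNgt -has_count; apply/hasPn => r /(allP s_le_b) r_le_b.
  by rewrite /= -ltnNge (leq_ltn_trans r_le_b).
apply/esym/negbTE; rewrite -ltnNge; case: j => [|j] //=.
case: (ltnP j (size s)) => [j_lt | j_ge]; last by rewrite nth_default.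
by apply: leq_ltn_trans b_lt_a; apply/(allP s_le_b)/mem_nth.
Qed.

Lemma in_partE l a b : (0 < a)%N -> (0 < b)%N ->
  in_part l (a, b) = (a <= rowl l b)%N.
Proof. by move=> a_gt0 b_gt0; rewrite /in_part /= a_gt0 b_gt0. Qed.

Lemma in_part_coll l a b : is_partition l -> (0 < a)%N -> (0 < b)%N ->
  in_part l (a, b) = (b <= coll l a)%N.
Proof.
case/andP=> l_sorted _ a_gt0 b_gt0.
by rewrite in_partE // /coll -[b in RHS](prednK b_gt0) sorted_geq_count.
Qed.

Section AddedCell.

Variables (l nu : seq nat) (x y : nat).
Hypotheses (l_part : is_partition l) (add_xy : adds_cell l nu (x, y)).

Lemma added_cell_gt0 : (0 < x)%N /\ (0 < y)%N.
Proof. by case: add_xy. Qed.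

Let x_gt0 := proj1 added_cell_gt0.
Let y_gt0 := proj2 added_cell_gt0.

Lemma rowl_added_neq b : (0 < b)%N -> b != y -> rowl nu b = rowl l b.
Proof.
case: add_xy => _ _ _ _ in_nu b_gt0 b_neq_y; apply: eq_of_leq_gt0 => a a_gt0.
by rewrite -!in_partE // in_nu xpair_eqE (negbTE b_neq_y) andbF orbF.
Qed.

Lemma coll_added_neq a : (0 < a)%N -> a != x -> coll nu a = coll l a.
Proof.
case: add_xy => nu_part _ _ _ in_nu a_gt0 a_neq_x; apply: eq_of_leq_gt0 => b b_gt0.
by rewrite -!in_part_coll // in_nu xpair_eqE (negbTE a_neq_x) orbF.
Qed.

Lemma rowl_added : rowl l y = x.-1 /\ rowl nu y = x.
Proof.
case: add_xy => _ _ _ xy_notin in_nu.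
apply: initial_segment_add1 => // [|a a_gt0]; first by rewrite ltnNge -in_partE.
by rewrite -!in_partE // in_nu xpair_eqE eqxx andbT.
Qed.

Lemma coll_added : coll l x = y.-1 /\ coll nu x = y.
Proof.
case: add_xy => nu_part _ _ xy_notin in_nu.
apply: initial_segment_add1 => // [|b b_gt0]; first by rewrite ltnNge -in_part_coll.
by rewrite -!in_part_coll // in_nu xpair_eqE eqxx.
Qed.

End AddedCell.

Lemma hw_eq0_outside_quadrant l e n c : ((c.1 < e.1) || (c.2 < e.2))%N ->
  hw l e n c = 0.
Proof.
elim: n c => [|n IH] [c1 c2] outside //=.
case: ifP => _.
  have c_neq_e : (c1, c2) != e by apply: contraTneq outside => <-; rewrite !ltnn.
  by rewrite (negbTE c_neq_e) mulr0n.
rewrite !big1 ?addr0 // => i _; rewrite IH ?mulr0 //=.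
all: case/orP: outside => lt; apply/orP; [left | right];
  by apply: leq_ltn_trans lt; rewrite ?leq_subr.
Qed.

Lemma hook_den_neq0 a b : (0 < a + b)%N -> 1 - qv ^+ a * tv ^+ b != 0.
Proof.
move=> ab_gt0.
(* Compare coefficients of t^b: that of q^a t^b is q^a, that of 1 vanishes unless b = 0. *)
have -> : 1 - qv ^+ a * tv ^+ b =
    FracField.tofrac (1 - ('X ^+ a)%:P * 'X ^+ b : {poly {poly rat}}).
  by rewrite tofracB tofrac1 tofracM !tofracXn polyC_exp tofracXn.
rewrite tofrac_eq0 subr_eq0; apply/eqP.
move=> /(congr1 (fun p : {poly {poly rat}} => p`_b)).
rewrite coefCM coefXn eqxx coef1 mulr1.
case: b ab_gt0 => [|b] /=.
  rewrite addn0 => a_gt0 /(congr1 (fun p : {poly rat} => size p)).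
  by rewrite size_polyXn size_poly1; case: a a_gt0.
by move=> _ /eqP; rewrite eq_sym expf_eq0 polyX_eq0 andbF.
Qed.

(* Stated over an abstract field: [field] is impractically slow on [K] itself. *)
Lemma arm_step_identity (F : fieldType) (Q q T P : F) : 1 - Q * T != 0 ->
  Q * (T * (1 - q) / (1 - Q * T) * P) + P = P * ((1 - Q * q * T) / (1 - Q * T)).
Proof. by move=> den_neq0; field. Qed.

Lemma leg_step_identity (F : fieldType) (t Q T P : F) : 1 - Q * T != 0 ->
  (1 - t) / (1 - Q * T) * P + t * P = P * ((1 - Q * (T * t)) / (1 - Q * T)).
Proof. by move=> den_neq0; field. Qed.

Section WalkToOuterCorner.

Variables (l : seq nat) (x y : nat).
Hypotheses (rowl_y : rowl l y = x.-1) (coll_x : coll l x = y.-1).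
Hypotheses (x_gt0 : (0 < x)%N) (y_gt0 : (0 < y)%N).

Definition row_leg i := leglen l (x + i, y)%N.
Definition row_den i : K := 1 - qv ^+ i * tv ^+ row_leg i.
Definition row_factor j : K := (1 - qv ^+ j.+1 * tv ^+ row_leg j) / row_den j.
Definition row_prob i : K :=
  if i is 0 then 1
  else tv ^+ row_leg i * (1 - qv) / row_den i * \prod_(1 <= j < i) row_factor j.

Lemma row_arm_sum i : (0 < i)%N ->
  \sum_(1 <= k < i.+1) qv ^+ (i - k) * row_prob (i - k) =
  \prod_(1 <= j < i) row_factor j.
Proof.
elim: i => [//|[|i] IH] _; first by rewrite big_nat1 big_geq // expr0 mul1r.
rewrite [LHS]big_nat_recl // subSS subn0.
under eq_bigr do rewrite subSS.
rewrite IH // [RHS]big_nat_recr //= /row_prob /row_factor [qv ^+ i.+2]exprSr.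
by rewrite arm_step_identity //; apply: hook_den_neq0.
Qed.

Lemma hw_row i n : (i < n)%N -> hw l (x, y) n (x + i, y)%N = row_prob i.
Proof.
elim/ltn_ind: i n => i IH [//|n] i_lt_Sn /=.
have -> : armlen l (x + i, y)%N = i by rewrite /armlen /= rowl_y; lia.
rewrite -/(row_leg i) -/(row_den i).
case: i IH i_lt_Sn => [|i] IH i_lt_Sn.
  have -> : row_leg 0 = 0%N by rewrite /row_leg /leglen /= addn0 coll_x; lia.
  by rewrite addn0 !eqxx.
rewrite /= [X in _ + X]big1_seq ?addr0 => [|j /andP[_]]; last first.
  by rewrite mem_index_iota => j_range; rewrite hw_eq0_outside_quadrant ?mulr0 //=; lia.
transitivity (\sum_(1 <= k < i.+2) tv ^+ row_leg i.+1 * (1 - qv) / row_den i.+1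
                                   * (qv ^+ (i.+1 - k) * row_prob (i.+1 - k))).
  apply: eq_big_nat => k /andP[k_gt0 k_lt].
  rewrite -addnBA ?IH; [|lia|lia|lia].
  by rewrite [RHS]mulrCA !mulrA.
by rewrite -big_distrr row_arm_sum.
Qed.

Definition col_arm j := armlen l (x, y + j)%N.
Definition col_den j : K := 1 - qv ^+ col_arm j * tv ^+ j.
Definition col_factor j : K := (1 - qv ^+ col_arm j * tv ^+ j.+1) / col_den j.
Definition col_prob j : K :=
  if j is 0 then 1 else (1 - tv) / col_den j * \prod_(1 <= m < j) col_factor m.

Lemma col_leg_sum j : (0 < j)%N ->
  \sum_(1 <= k < j.+1) tv ^+ k.-1 * col_prob (j - k) =
  \prod_(1 <= m < j) col_factor m.
Proof.
elim: j => [//|[|j] IH] _; first by rewrite big_nat1 big_geq // expr0 mul1r.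
rewrite [LHS]big_nat_recl // subSS subn0 expr0 mul1r.
transitivity
    (col_prob j.+1 + tv * \sum_(1 <= k < j.+2) tv ^+ k.-1 * col_prob (j.+1 - k)).
  rewrite big_distrr /=; congr (_ + _); apply: eq_big_nat => k /andP[k_gt0 _].
  by rewrite subSS mulrA -exprS prednK.
rewrite IH // [RHS]big_nat_recr //= /col_prob /col_factor [tv ^+ j.+2]exprSr.
by rewrite leg_step_identity //; apply: hook_den_neq0; rewrite addnS.
Qed.

Lemma hw_col j n : (j < n)%N -> hw l (x, y) n (x, y + j)%N = col_prob j.
Proof.
elim/ltn_ind: j n => j IH [//|n] j_lt_Sn /=.
have -> : leglen l (x, y + j)%N = j by rewrite /leglen /= coll_x; lia.
rewrite -/(col_arm j) -/(col_den j).
case: j IH j_lt_Sn => [|j] IH j_lt_Sn.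
  have -> : col_arm 0 = 0%N by rewrite /col_arm /armlen /= addn0 rowl_y; lia.
  by rewrite addn0 !eqxx.
rewrite /= andbF [X in X + _]big1_seq => [|k /andP[_]]; last first.
  by rewrite mem_index_iota => k_range; rewrite hw_eq0_outside_quadrant ?mulr0 //=; lia.
rewrite add0r.
transitivity (\sum_(1 <= k < j.+2)
    (1 - tv) / col_den j.+1 * (tv ^+ k.-1 * col_prob (j.+1 - k))).
  apply: eq_big_nat => k /andP[k_gt0 k_lt].
  rewrite -addnBA ?IH; [|lia|lia|lia].
  by rewrite [RHS]mulrCA !mulrA.
by rewrite -big_distrr col_leg_sum.
Qed.

End WalkToOuterCorner.

Lemma arm_right_of l x y i : rowl l y = x.-1 -> (0 < x)%N ->
  arm l (x + i, y)%N = [seq (x + j, y)%N | j <- iota 0 i].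
Proof.
move=> rowl_y x_gt0; rewrite /arm /= rowl_y prednK // addKn.
by rewrite -[x in iota x]addn0 iotaDl -map_comp.
Qed.

Lemma leg_above l x y j : coll l x = y.-1 -> (0 < y)%N ->
  leg l (x, y + j)%N = [seq (x, y + m)%N | m <- iota 0 j].
Proof.
move=> coll_x y_gt0; rewrite /leg /= coll_x prednK // addKn.
by rewrite -[y in iota y]addn0 iotaDl -map_comp.
Qed.

Section WalkFromAddedCell.

Variables (l nu : seq nat) (x y : nat).
Hypotheses (l_part : is_partition l) (add_xy : adds_cell l nu (x, y)).

Let x_gt0 := proj1 (added_cell_gt0 add_xy).
Let y_gt0 := proj2 (added_cell_gt0 add_xy).
Let rowl_l := proj1 (rowl_added add_xy).
Let rowl_nu := proj2 (rowl_added add_xy).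
Let coll_l := proj1 (coll_added l_part add_xy).
Let coll_nu := proj2 (coll_added l_part add_xy).

Lemma hook_prob_right u : (0 < u)%N ->
  let c := (x + u, y)%N in
  hook_prob l (x, y) c =
    tv ^+ leglen l c * (1 - qv)
      / (1 - qv ^+ (armlen nu c).+1 * tv ^+ leglen nu c)
    * \prod_(c' <- arm l c | c' != (x, y))
        ((1 - qv ^+ (armlen l c').+1 * tv ^+ leglen l c')
         / (1 - qv ^+ (armlen nu c').+1 * tv ^+ leglen nu c')).
Proof.
move=> u_gt0 c; rewrite /hook_prob (hw_row rowl_l coll_l) //; last by rewrite /c /=; lia.
have armlen_l j : armlen l (x + j, y)%N = j by rewrite /armlen /= rowl_l; lia.
have armlen_nu j : (0 < j)%N -> (armlen nu (x + j, y)%N).+1 = j.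
  by rewrite /armlen /= rowl_nu; lia.
have leglen_nu j : (0 < j)%N -> leglen nu (x + j, y)%N = row_leg l x y j.
  by move=> j_gt0; rewrite /leglen /= (coll_added_neq l_part add_xy) //; lia.
case: u u_gt0 @c => // u _; rewrite /row_prob armlen_nu // leglen_nu //; congr (_ * _).
rewrite arm_right_of // big_map /= big_cons addn0 eqxx /= /index_iota subn1 /=.
rewrite big_seq_cond [RHS]big_seq_cond; apply: eq_big => [j | j /andP[j_in _]].
  rewrite andbT; case: (boolP (j \in iota 1 u)) => //= /[!mem_iota] j_range.
  by rewrite xpair_eqE eqxx andbT; lia.
rewrite mem_iota in j_in.
by rewrite /row_factor /row_den armlen_l armlen_nu ?leglen_nu //; lia.
Qed.

Lemma hook_prob_above v : (0 < v)%N ->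
  let c := (x, y + v)%N in
  hook_prob l (x, y) c =
    (1 - tv) / (1 - qv ^+ armlen nu c * tv ^+ (leglen nu c).+1)
    * \prod_(c'' <- leg l c | c'' != (x, y))
        ((1 - qv ^+ armlen l c'' * tv ^+ (leglen l c'').+1)
         / (1 - qv ^+ armlen nu c'' * tv ^+ (leglen nu c'').+1)).
Proof.
move=> v_gt0 c; rewrite /hook_prob (hw_col rowl_l coll_l) //; last by rewrite /c /=; lia.
have leglen_l j : leglen l (x, y + j)%N = j by rewrite /leglen /= coll_l; lia.
have leglen_nu j : (0 < j)%N -> (leglen nu (x, y + j)%N).+1 = j.
  by rewrite /leglen /= coll_nu; lia.
have armlen_nu j : (0 < j)%N -> armlen nu (x, y + j)%N = col_arm l x y j.
  by move=> j_gt0; rewrite /armlen /= (rowl_added_neq add_xy) //; lia.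
case: v v_gt0 @c => // v _; rewrite /col_prob armlen_nu // leglen_nu //; congr (_ * _).
rewrite leg_above // big_map /= big_cons addn0 eqxx /= /index_iota subn1 /=.
rewrite big_seq_cond [RHS]big_seq_cond; apply: eq_big => [j | j /andP[j_in _]].
  rewrite andbT; case: (boolP (j \in iota 1 v)) => //= /[!mem_iota] j_range.
  by rewrite xpair_eqE eqxx /=; lia.
rewrite mem_iota in j_in.
by rewrite /col_factor /col_den leglen_l leglen_nu ?armlen_nu //; lia.
Qed.

End WalkFromAddedCell.

Unset Implicit Arguments.

Theorem lemma6p7 (l nu : seq nat) (x y u v : nat) :
  is_partition l -> adds_cell l nu (x, y) -> (1 <= u)%N -> (1 <= v)%N ->
  (let c := (x + u, y)%N in
   hook_prob l (x, y) c =
     tv ^+ leglen l c * (1 - qv)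
       / (1 - qv ^+ (armlen nu c).+1 * tv ^+ leglen nu c)
     * \prod_(c' <- arm l c | c' != (x, y))
         ((1 - qv ^+ (armlen l c').+1 * tv ^+ leglen l c')
          / (1 - qv ^+ (armlen nu c').+1 * tv ^+ leglen nu c')))
  /\
  (let c := (x, y + v)%N in
   hook_prob l (x, y) c =
     (1 - tv) / (1 - qv ^+ armlen nu c * tv ^+ (leglen nu c).+1)
     * \prod_(c'' <- leg l c | c'' != (x, y))
         ((1 - qv ^+ armlen l c'' * tv ^+ (leglen l c'').+1)
          / (1 - qv ^+ armlen nu c'' * tv ^+ (leglen nu c'').+1))).
Proof.
move=> l_part add_xy u_gt0 v_gt0.
by split; [exact: hook_prob_right | exact: hook_prob_above].
Qed.
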